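(* Let $n=n_1+\dots+n_k=p+q$ with positive integers, let $G=U(n)$, let $L=U(n_1)\times\cdots\times U(n_k)$ and $H=U(p)\times U(q)$ be the natural block-diagonal subgroups of $G$, and let $G'=O(n)$. If $\min(p,q)=2$ and $k\ge 4$, then $LG'H\subsetneq G$.
   Context: $LG'H=\{xyz:x\in L,y\in G',z\in H\}$. *)

From HB Require Import structures.
From mathcomp Require Import all_boot all_order all_algebra.
From mathcomp Require Import complex.
From mathcomp Require Import reals.
Set Implicit Arguments. Unset Strict Implicit. Unset Printing Implicit Defensive.
Import Order.TTheory GRing.Theory Num.Theory.
Local Open Scope ring_scope.

Definition adjmx (R : rcfType) (n : nat) (A : 'M[R[i]]_n) : 'M[R[i]]_n :=
  (map_mx (@conjc R) A)^T.

Definition unitary (R : rcfType) (n : nat) (A : 'M[R[i]]_n) : Prop :=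
  A *m adjmx A = 1%:M.

(* O(n), viewed inside U(n): real entries and unitary (= orthogonal) *)
Definition orthogonal (R : rcfType) (n : nat) (A : 'M[R[i]]_n) : Prop :=
  (exists B : 'M[R]_n, A = map_mx (fun x : R => (x%:C)%C) B) /\ unitary A.

(* For a composition ns = [:: n_1; ...; n_k] of n, blk ns i is the index
   (0-based) of the consecutive block {n_1+...+n_b, ..., n_1+...+n_{b+1}-1}
   containing i. *)
Definition blk (ns : seq nat) (i : nat) : nat :=
  count (fun b => sumn (take b.+1 ns) <= i)%N (iota 0 (size ns)).

Definition block_diag (R : rcfType) (n : nat) (ns : seq nat)
  (A : 'M[R[i]]_n) : Prop :=
  forall i j : 'I_n, blk ns i <> blk ns j -> A i j = 0.

(* U(n_1) x ... x U(n_k) embedded block-diagonally in U(n) *)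
Definition blockU (R : rcfType) (n : nat) (ns : seq nat)
  (A : 'M[R[i]]_n) : Prop := unitary A /\ block_diag ns A.

Definition LGH_set (R : rcfType) (n : nat) (ns : seq nat) (p q : nat)
  (g : 'M[R[i]]_n) : Prop :=
  exists l o h : 'M[R[i]]_n,
    [/\ blockU ns l, orthogonal o, blockU [:: p; q] h & g = l *m o *m h].

(* If g = l o h with l in L, o in O(n) and h in H, then, o being real orthogonal,
   g^* (l l^T) conj(g) = h^* conj(h).  Thus g carries the L-block-diagonal matrix
   l l^T to a unitary H-block-diagonal matrix under A |-> g^* A conj(g).
   The witness is a 4 x 4 unitary U acting on one coordinate from each of four
   blocks of L, the coordinates being permuted so that the first two span the
   2-dimensional factor of H.  There l l^T is diagonal, and the vanishing of the
   off-diagonal H-block of U^* diag(d) conj(U) forces d = 0 (a nonsingular linear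
   system, possible because U is genuinely complex).  Then the first row of the
   unitary h^* conj(h) vanishes, which is absurd. *)

From HB Require Import structures.
From mathcomp Require Import all_boot all_order all_algebra perm.
From mathcomp Require Import complex.
From mathcomp Require Import reals.
From mathcomp Require Import ring lra zify.
Set Implicit Arguments. Unset Strict Implicit. Unset Printing Implicit Defensive.
Import Order.TTheory GRing.Theory Num.Theory.

Lemma sumn_take_ltn (ns : seq nat) a b : all (fun m => 0 < m) ns ->
  a < b <= size ns -> sumn (take a ns) < sumn (take b ns).
Proof.
elim: ns a b => [|x ns IH] a b /=; first by case: b => [|b]; rewrite ?andbF.
case/andP=> x_gt0 pos; case: a b => [|a] [|b] //= ab.
- exact: ltn_addr.
- by rewrite ltn_add2l IH.
Qed.

Lemma leq_sumn_take (ns : seq nat) a b : all (fun m => 0 < m) ns ->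
  a <= size ns -> b <= size ns ->
  (sumn (take a ns) <= sumn (take b ns)) = (a <= b).
Proof.
move=> pos a_le b_le; case: (ltngtP a b) => [ab|ba|->]; last exact: leqnn.
- by rewrite ltnW // sumn_take_ltn ?ab.
- by apply/negbTE; rewrite -ltnNge sumn_take_ltn ?ba.
Qed.

Lemma blk_sumn_take (ns : seq nat) a : all (fun m => 0 < m) ns ->
  a <= size ns -> blk ns (sumn (take a ns)) = a.
Proof.
move=> pos a_le; rewrite /blk (eq_in_count (a2 := fun b => b < a)); last first.
  by move=> b; rewrite mem_iota add0n => b_lt; rewrite leq_sumn_take.
by rewrite -size_filter (filter_iota_ltn 0 a_le) size_iota.
Qed.

Lemma blk_pair p q i : i < p + q -> blk [:: p; q] i = (p <= i).
Proof. by move=> i_lt; rewrite /blk /= !addn0 (leqNgt (p + q)) i_lt addn0. Qed.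

Lemma perm_extend_incr n k (f : nat -> nat) :
  (forall a b, a < b < k -> f a < f b) -> (forall a, a < k -> f a < n) ->
  exists s : 'S_n, forall a : 'I_n, a < k -> s a = f a :> nat.
Proof.
move=> f_incr f_lt.
suff [s [s_f _]] : exists s : 'S_n, (forall a : 'I_n, a < k -> s a = f a :> nat)
    /\ (forall x : 'I_n, (forall c, c < k -> f c < x) -> s x = x).
  by exists s.
elim: k f_incr f_lt => [|k IH] f_incr f_lt.
  by exists 1%g; split=> // x _; rewrite perm1.
have f_ge a : a <= k -> a <= f a.
  elim: a => // a IHa a_lt; apply: leq_ltn_trans (IHa (ltnW a_lt)) _.
  by rewrite f_incr ?leqnn.
case: IH => [a b /andP[ab bk]|a ak|s [s_f s_fix]].
- by rewrite f_incr // ab ltnW.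
- by rewrite f_lt // ltnW.
have fk_lt : f k < n by rewrite f_lt.
have k_lt : k < n by rewrite (leq_ltn_trans (f_ge k _)).
have f_below_fk c : c < k -> f c < f k by move=> ck; apply: f_incr; rewrite ck /=.
exists (tperm (Ordinal k_lt) (Ordinal fk_lt) * s)%g; split.
- move=> a; rewrite permM ltnS leq_eqVlt => /predU1P[a_k|a_lt].
    have -> : a = Ordinal k_lt by apply: val_inj.
    by rewrite tpermL s_fix.
  rewrite tpermD ?s_f // -val_eqE /= neq_ltn ?a_lt ?orbT //.
  by rewrite (leq_trans a_lt (f_ge _ (leqnn k))) orbT.
- move=> x x_gt; have fk_x : f k < x by rewrite x_gt.
  rewrite permM tpermD ?s_fix -?val_eqE /= ?neq_ltn ?fk_x ?orbT //.
  + by move=> c ck; rewrite x_gt // ltnW.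
  + by rewrite (leq_ltn_trans (f_ge k _)).
Qed.

Lemma exists_perm_blk_id n (ns : seq nat) k : all (fun m => 0 < m) ns ->
  sumn ns = n -> k <= size ns ->
  exists s : 'S_n, forall a : 'I_n, a < k -> blk ns (s a) = a.
Proof.
move=> pos <- k_le.
have [|a ak|s s_f] := @perm_extend_incr (sumn ns) k (fun a => sumn (take a ns)).
- by move=> a b /andP[ab bk]; rewrite sumn_take_ltn // ab (leq_trans (ltnW bk)).
- rewrite -[X in _ < sumn X]take_size sumn_take_ltn //.
  by rewrite (leq_trans ak k_le) leqnn.
by exists s => a ak; rewrite s_f // blk_sumn_take // ltnW // (leq_trans ak).
Qed.

Lemma exists_perm_pair_block n p q : p + q = n ->
  exists u : 'S_n, forall x y : 'I_n, x < minn p q <= y ->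
    blk [:: p; q] (u x) != blk [:: p; q] (u y).
Proof.
move=> pq; case: (leqP p q) => [p_le|q_lt].
  exists 1%g => x y; rewrite !perm1 !blk_pair ?pq ?ltn_ord //.
  by case/andP=> x_lt y_ge; rewrite leqNgt x_lt y_ge.
exists (perm (@rev_ord_inj n)) => x y.
by rewrite !permE !blk_pair ?pq ?ltn_ord //=; lia.
Qed.

Local Open Scope ring_scope.

Section ConjugateTranspose.
Variable R : rcfType.
Local Notation C := R[i].
Local Notation conjmx := (map_mx (@conjc R)).
Implicit Types n m k : nat.

Lemma conjmxK m k (A : 'M[C]_(m, k)) : conjmx (conjmx A) = A.
Proof. by apply/matrixP => i j; rewrite !mxE conjcK. Qed.

Lemma conjmx_adj n (A : 'M[C]_n) : conjmx (adjmx A) = A^T.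
Proof. by rewrite /adjmx map_trmx conjmxK. Qed.

Lemma adjmxK n (A : 'M[C]_n) : adjmx (adjmx A) = A.
Proof. by apply/matrixP => i j; rewrite !mxE conjcK. Qed.

Lemma adjmxM n (A B : 'M[C]_n) : adjmx (A *m B) = adjmx B *m adjmx A.
Proof. by rewrite /adjmx map_mxM trmx_mul. Qed.

Lemma adjmxZ n a (A : 'M[C]_n) : adjmx (a *: A) = conjc a *: adjmx A.
Proof. by apply/matrixP => i j; rewrite !mxE rmorphM. Qed.

Lemma conjmxZ m k a (A : 'M[C]_(m, k)) : conjmx (a *: A) = conjc a *: conjmx A.
Proof. by apply/matrixP => i j; rewrite !mxE rmorphM. Qed.

Lemma conjmx_perm n (s : 'S_n) : conjmx (perm_mx s) = perm_mx s :> 'M[C]_n.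
Proof. by apply/matrixP => i j; rewrite !mxE conjc_nat. Qed.

Lemma adjmx_perm n (s : 'S_n) : adjmx (perm_mx s) = perm_mx s^-1 :> 'M[C]_n.
Proof. by rewrite /adjmx conjmx_perm tr_perm_mx. Qed.

Lemma conjmx_real m k (B : 'M[R]_(m, k)) :
  conjmx (map_mx (fun x : R => (x%:C)%C) B) = map_mx (fun x : R => (x%:C)%C) B.
Proof. by apply/matrixP => i j; rewrite !mxE conjc_real. Qed.

Lemma conjmx_block1 n m (A : 'M[C]_n) :
  conjmx (block_mx A 0 0 1%:M : 'M_(n + m)) = block_mx (conjmx A) 0 0 1%:M.
Proof. by rewrite map_block_mx !map_mx0 map_mx1. Qed.

Lemma adjmx_block1 n m (A : 'M[C]_n) :
  adjmx (block_mx A 0 0 1%:M : 'M_(n + m)) = block_mx (adjmx A) 0 0 1%:M.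
Proof. by rewrite /adjmx conjmx_block1 tr_block_mx !trmx0 trmx1. Qed.

Lemma unitaryC n (A : 'M[C]_n) : unitary A -> adjmx A *m A = 1%:M.
Proof. exact: mulmx1C. Qed.

Lemma unitary_mul n (A B : 'M[C]_n) : unitary A -> unitary B -> unitary (A *m B).
Proof.
by rewrite /unitary adjmxM mulmxA => uA uB; rewrite -(mulmxA A) uB mulmx1.
Qed.

Lemma unitary_adjmx n (A : 'M[C]_n) : unitary A -> unitary (adjmx A).
Proof. by rewrite /unitary adjmxK => /unitaryC. Qed.

Lemma unitary_conjmx n (A : 'M[C]_n) : unitary A -> unitary (conjmx A).
Proof.
by rewrite /unitary /adjmx conjmxK => uA; rewrite -conjmx_adj -map_mxM uA map_mx1.
Qed.

Lemma unitary_perm n (s : 'S_n) : unitary (perm_mx s : 'M[C]_n).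
Proof. by rewrite /unitary adjmx_perm -perm_mxM mulgV perm_mx1. Qed.

Lemma unitary_block1 n m (A : 'M[C]_n) :
  unitary A -> unitary (block_mx A 0 0 1%:M : 'M_(n + m)).
Proof.
rewrite /unitary adjmx_block1 mulmx_block => uA.
by rewrite !mulmx0 !mul0mx !mulmx1 !addr0 !add0r uA -scalar_mx_block.
Qed.

Lemma unitary_row_nonzero n (A : 'M[C]_n) i :
  unitary A -> ~ (forall j, A i j = 0).
Proof.
move=> /matrixP /(_ i i) + A_i0; rewrite !mxE eqxx big1 => [/eqP|j _].
  by rewrite eq_sym oner_eq0.
by rewrite A_i0 mul0r.
Qed.

Lemma perm_conjmxE n (s : 'S_n) (A : 'M[C]_n) i j :
  (perm_mx s *m A *m (perm_mx s)^T) i j = A (s i) (s j).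
Proof. by rewrite -row_permE tr_perm_mx -col_permE !mxE. Qed.

Lemma block_diag_mul n ns (A B : 'M[C]_n) :
  block_diag ns A -> block_diag ns B -> block_diag ns (A *m B).
Proof.
move=> bA bB i j ij; rewrite mxE big1 // => k _.
have [ik|ik] := eqVneq (blk ns i) (blk ns k).
  by rewrite bB ?mulr0 // -ik.
by rewrite bA ?mul0r //; apply/eqP.
Qed.

Lemma block_diag_tr n ns (A : 'M[C]_n) : block_diag ns A -> block_diag ns A^T.
Proof. by move=> bA i j ij; rewrite mxE bA // => /esym. Qed.

Lemma block_diag_conjmx n ns (A : 'M[C]_n) :
  block_diag ns A -> block_diag ns (conjmx A).
Proof. by move=> bA i j ij; rewrite mxE bA // conjc0. Qed.

Lemma block_diag_adjmx n ns (A : 'M[C]_n) :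
  block_diag ns A -> block_diag ns (adjmx A).
Proof. by move=> bA; apply/block_diag_tr/block_diag_conjmx. Qed.

Lemma LGH_set_congruence n ns p q (g : 'M[C]_n) : LGH_set ns p q g ->
  exists T S, [/\ block_diag ns T, block_diag [:: p; q] S, unitary S
                & adjmx g *m T *m conjmx g = S].
Proof.
move=> [l [o [h [[ul bl] [[B o_real] uo] [uh bh] ->]]]].
have o_conj : conjmx o = o by rewrite o_real conjmx_real.
exists (l *m l^T), (adjmx h *m conjmx h); split.
- exact: block_diag_mul (block_diag_tr bl).
- exact: block_diag_mul (block_diag_adjmx bh) (block_diag_conjmx bh).
- exact: unitary_mul (unitary_adjmx uh) (unitary_conjmx uh).
have l_tr_conj : l^T *m conjmx l = 1%:M.
  by rewrite -conjmx_adj -map_mxM unitaryC // map_mx1.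
have o_tr : adjmx o *m conjmx o = 1%:M by rewrite o_conj unitaryC.
rewrite !adjmxM !map_mxM !mulmxA -(mulmxA _ (adjmx l)) unitaryC // mulmx1.
by rewrite -(mulmxA _ l^T) l_tr_conj mulmx1 -(mulmxA _ (adjmx o)) o_tr mulmx1.
Qed.

Lemma perm_sandwich_congr n (s u : 'S_n) (D T : 'M[C]_n) :
  let g := (perm_mx s)^T *m D *m perm_mx u in
  perm_mx u *m (adjmx g *m T *m conjmx g) *m (perm_mx u)^T
    = adjmx D *m (perm_mx s *m T *m (perm_mx s)^T) *m conjmx D.
Proof.
rewrite /= !adjmxM !map_mxM !tr_perm_mx !adjmx_perm !conjmx_perm invgK !mulmxA.
rewrite -perm_mxM mulgV perm_mx1 mul1mx -!mulmxA -perm_mxM mulgV perm_mx1.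
by rewrite mulmx1.
Qed.

End ConjugateTranspose.

Section Gadget.
Variable R : rcfType.
Local Notation C := R[i].
Local Notation conjmx := (map_mx (@conjc R)).
Local Open Scope complex_scope.

Definition core4 : 'M[C]_4 := \matrix_(i < 4, j < 4)
  (nth [::] [:: [:: 0 +i* 0; 1 +i* 0;    1 +i* 1;    1 +i* 0];
                [:: 1 +i* 1; 1 +i* 0;    0 +i* 0;    (-1) +i* 0];
                [:: 1 +i* 0; 0 +i* 1;    0 +i* (-1); 1 +i* 0];
                [:: 1 +i* 0; (-1) +i* 0; 0 +i* 1;    0 +i* (-1)]] i)`_j.

Lemma core4_mul_adj : core4 *m adjmx core4 = 4%:M.
Proof.
apply/matrixP => i j; rewrite !mxE !big_ord_recl big_ord0 !mxE /=.
case: i j => [[|[|[|[|i]]]] ?] [[|[|[|[|j]]]] ?] //=;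
  apply/eqP; rewrite eq_complex /=; apply/andP; split; apply/eqP; ring.
Qed.

Lemma core4_congr_diag_eq0 (d : 'rV[C]_4) :
  (forall x y : 'I_4, (x < 2 <= y)%N ->
     (adjmx core4 *m diag_mx d *m conjmx core4) x y = 0) -> d = 0.
Proof.
move=> off0; pose e k := d 0 (inord k).
have d_e (k : 'I_4) : d 0 k = e k by rewrite /e inord_val.
clearbody e.
suff [e0 e1 e2 e3] : [/\ e 0%N = 0, e 1%N = 0, e 2%N = 0 & e 3%N = 0].
  by apply/rowP => -[[|[|[|[|k]]]] k_lt]; rewrite !mxE d_e.
have := off0 (@Ordinal 4 0 isT) (@Ordinal 4 2 isT) isT.
have := off0 (@Ordinal 4 0 isT) (@Ordinal 4 3 isT) isT.
have := off0 (@Ordinal 4 1 isT) (@Ordinal 4 2 isT) isT.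
have := off0 (@Ordinal 4 1 isT) (@Ordinal 4 3 isT) isT.
rewrite mul_mx_diag /adjmx !mxE !big_ord_recl !big_ord0 !mxE !d_e /=.
(* The four entries are i(d2 - d3), -(1 - i)d1 + d2 + i d3, (1 - i)d0 + d2 + i d3
   and d0 - d1 - i(d2 + d3): they force d2 = d3, d1 = i d3, d0 = -i d3, and
   then d3 = 0. *)
move: (e 0%N) (e 1%N) (e 2%N) (e 3%N) => [a0 b0] [a1 b1] [a2 b2] [a3 b3].
do 4 (move=> /eqP; rewrite eq_complex /= => /andP[/eqP ? /eqP ?]).
by split; apply/eqP; rewrite eq_complex /=; apply/andP; split; apply/eqP; lra.
Qed.

Definition U4 : 'M[C]_4 := 2^-1 *: core4.

Lemma conjc_half : conjc (2^-1 : C) = 2^-1.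
Proof. by rewrite conjc_inv conjc_nat. Qed.

Lemma unitary_U4 : unitary U4.
Proof.
have two_neq0 : (2 : C) != 0 by rewrite pnatr_eq0.
rewrite /unitary adjmxZ -scalemxAl -scalemxAr core4_mul_adj scalerA.
rewrite scale_scalar_mx conjc_half -[4]/(2 * 2)%:R natrM.
by rewrite mulrACA mulVf // mul1r.
Qed.

Lemma U4_congr_diag_eq0 (d : 'rV[C]_4) :
  (forall x y : 'I_4, (x < 2 <= y)%N ->
     (adjmx U4 *m diag_mx d *m conjmx U4) x y = 0) -> d = 0.
Proof.
move=> off0; apply: core4_congr_diag_eq0 => x y xy; move: (off0 x y xy).
rewrite adjmxZ conjmxZ conjc_half -scalemxAl -scalemxAr -scalemxAl !mxE.
by move=> /eqP; rewrite !mulf_eq0 invr_eq0 pnatr_eq0 => /eqP.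
Qed.

Lemma block1_congr_nogo m (T S : 'M[C]_(4 + m)) :
  (forall a b : 'I_4, a != b -> T (lshift m a) (lshift m b) = 0) ->
  (forall x y : 'I_(4 + m), (x < 2 <= y)%N -> S x y = 0) ->
  unitary S ->
  S <> adjmx (block_mx U4 0 0 1%:M) *m T *m conjmx (block_mx U4 0 0 1%:M).
Proof.
move=> T_diag S_off uS S_eq.
have ulS : ulsubmx S = adjmx U4 *m ulsubmx T *m conjmx U4.
  rewrite S_eq adjmx_block1 conjmx_block1 -{1}[T]submxK !mulmx_block block_mxKul.
  by rewrite !mulmx0 !mul0mx !addr0.
have ulT : ulsubmx T = diag_mx (\row_a T (lshift m a) (lshift m a)).
  apply/matrixP => a b; rewrite !mxE.
  by have [<-|ab] := eqVneq a b; rewrite ?mulr1n // T_diag // mulr0n.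
have ulS0 : ulsubmx S = 0.
  rewrite ulS ulT (U4_congr_diag_eq0 (d := \row_a T (lshift m a) (lshift m a))).
    by rewrite linear0 mulmx0 mul0mx.
  by move=> x y xy; rewrite -ulT -ulS !mxE S_off.
apply: (unitary_row_nonzero (i := lshift m (@ord0 3)) uS) => j.
have [j_lt|j_ge] := ltnP j 2; last by rewrite S_off.
pose j' : 'I_4 := Ordinal (ltn_trans j_lt (isT : (2 < 4)%N)).
have -> : j = lshift m j' by apply: val_inj.
by move/matrixP: ulS0 => /(_ ord0 j'); rewrite !mxE.
Qed.

End Gadget.

Theorem proposition6p6 (R : realType) (n : nat) (ns : seq nat) (p q : nat) :
  all (fun m => 0 < m)%N ns -> sumn ns = n ->
  (0 < p)%N -> (0 < q)%N -> (p + q)%N = n ->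
  minn p q = 2%N -> (4 <= size ns)%N ->
  (forall g : 'M[R[i]]_n, LGH_set ns p q g -> unitary g) /\
  (exists g : 'M[R[i]]_n, unitary g /\ ~ LGH_set ns p q g).
Proof.
move=> pos sum_ns _ _ pq min_pq size_ns; split.
  move=> _ [l [o [h [[ul _] [_ uo] [uh _] ->]]]].
  exact: unitary_mul (unitary_mul ul uo) uh.
have [m n_eq] : exists m, n = (4 + m)%N by exists (n - 4)%N; lia.
rewrite {}n_eq in sum_ns pq *.
have [s s_blk] := exists_perm_blk_id pos sum_ns size_ns.
have [u u_blk] := exists_perm_pair_block pq; rewrite min_pq in u_blk.
pose D := block_mx (U4 R) 0 0 1%:M : 'M_(4 + m).
exists ((perm_mx s)^T *m D *m perm_mx u); split.
  rewrite tr_perm_mx.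
  have uD : unitary D by exact: unitary_block1 (unitary_U4 R).
  exact: unitary_mul (unitary_mul (unitary_perm _ _) uD) (unitary_perm _ _).
case/LGH_set_congruence => T [S [T_blk S_blk uS S_eq]].
apply: (@block1_congr_nogo _ m (perm_mx s *m T *m (perm_mx s)^T)
                               (perm_mx u *m S *m (perm_mx u)^T)).
- move=> a b ab; rewrite perm_conjmxE T_blk // !s_blk //=.
  by apply/eqP; rewrite -val_eqE in ab.
- by move=> x y xy; rewrite perm_conjmxE S_blk //; apply/eqP/u_blk.
- rewrite tr_perm_mx.
  exact: unitary_mul (unitary_mul (unitary_perm _ _) uS) (unitary_perm _ _).
- by rewrite -S_eq perm_sandwich_congr.
Qed.
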